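(* Let $R$ be a ring with multiplicative identity, let $D\subset \mathcal{M}(R)^N$ be a free set, and let $f:D\to\mathcal{M}(R)^{\hat N}$ be a free map. Then the following are equivalent: (1) For every $n$, every $X\in D\cap\mathcal{M}_n(R)^N$ and every $H\in\mathcal{M}_n(R)^N$ with $\begin{pmatrix}X&H\\0&X\end{pmatrix}\in D$, the equality $Df(X)[H]=0$ implies $H=0$ (i.e. $Df(X)$ is nonsingular at every $X\in D$). (2) $f$ is injective on $D$. (3) $f$ is injective, and its inverse $f^{-1}:f(D)\to D$ is a free map (in particular $f(D)$ is a free set).
   Context: $\mathcal{M}_n(R)$ denotes the $n\times n$ matrices over $R$ and $\mathcal{M}(R)^N=\bigcup_{n\ge1}\mathcal{M}_n(R)^N$ is the set of $N$-tuples of square matrices of a common size. For tuples, $(A_1,\dots,A_N)\oplus(B_1,\dots,B_N)=(A_1\oplus B_1,\dots,A_N\oplus B_N)$ and $S^{-1}(A_1,\dots,A_N)S=(S^{-1}A_1S,\dots,S^{-1}A_NS)$; block matrices of tuples such as $\begin{pmatrix}X&H\\0&X\end{pmatrix}$ are formed coordinatewise. A free set $D\subset\mathcal{M}(R)^N$ is one with: $A,B\in D\Rightarrow A\oplus B\in D$, and $A\in D\cap\mathcal{M}_n(R)^N$, $S\in GL_n(R)$ $\Rightarrow S^{-1}AS\in D$. A free map $f:D\to\mathcal{M}(R)^{\hat N}$ on a free set $D$ sends $D\cap \mathcal{M}_n(R)^N$ into $\mathcal{M}_n(R)^{\hat N}$ and satisfies $f(A\oplus B)=f(A)\oplus f(B)$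 and $f(S^{-1}AS)=S^{-1}f(A)S$. Derivative: for $X\in D\cap\mathcal{M}_n(R)^N$ and $H\in\mathcal{M}_n(R)^N$ with $\begin{pmatrix}X&H\\0&X\end{pmatrix}\in D$, one has (standing convention of the paper, used as the definition of the derivative) $f\begin{pmatrix}X&H\\0&X\end{pmatrix}=\begin{pmatrix}f(X)&Df(X)[H]\\0&f(X)\end{pmatrix}$, i.e. $Df(X)[H]$ is the upper-right $n\times n$ block of $f\begin{pmatrix}X&H\\0&X\end{pmatrix}$. *)

From HB Require Import structures.
From mathcomp Require Import all_boot all_order all_algebra.
Set Implicit Arguments. Unset Strict Implicit. Unset Printing Implicit Defensive.
Import GRing.Theory.
Local Open Scope ring_scope.

Definition mtup (R : pzRingType) (N n : nat) := {ffun 'I_N -> 'M[R]_n}.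

(* A subset of M(R)^N = union over n of M_n(R)^N, given sizewise *)
Definition fset (R : pzRingType) (N : nat) := forall n : nat, mtup R N n -> Prop.
Definition fmap (R : pzRingType) (N Nh : nat) := forall n : nat, mtup R N n -> mtup R Nh n.

Definition tdsum (R : pzRingType) N n m (A : mtup R N n) (B : mtup R N m)
  : mtup R N (n + m) := [ffun i => block_mx (A i) 0 0 (B i)].

(* S invertible with inverse T : S^-1 A S is written T A S *)
Definition inv_pair (R : pzRingType) n (S T : 'M[R]_n) :=
  S *m T = 1%:M /\ T *m S = 1%:M.

Definition tconj (R : pzRingType) N n (T : 'M[R]_n) (A : mtup R N n) (S : 'M[R]_n)
  : mtup R N n := [ffun i => T *m A i *m S].

Definition tblk (R : pzRingType) N n (X H : mtup R N n) : mtup R N (n + n) :=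
  [ffun i => block_mx (X i) (H i) 0 (X i)].

Definition is_free_set (R : pzRingType) N (D : fset R N) : Prop :=
  (forall n A, D n A -> (0 < n)%N) /\
  (forall n m A B, D n A -> D m B -> D (n + m)%N (tdsum A B)) /\
  (forall n A S T, D n A -> inv_pair S T -> D n (tconj T A S)).

Definition is_free_map (R : pzRingType) N Nh (D : fset R N) (f : fmap R N Nh) : Prop :=
  (forall n m A B, D n A -> D m B -> f (n + m)%N (tdsum A B) = tdsum (f n A) (f m B)) /\
  (forall n A S T, D n A -> inv_pair S T -> f n (tconj T A S) = tconj T (f n A) S).

Definition Dfree (R : pzRingType) N Nh (f : fmap R N Nh) n (X H : mtup R N n)
  : mtup R Nh n := [ffun i => ursubmx (f (n + n)%N (tblk X H) i)].

Definition free_image (R : pzRingType) N Nh (D : fset R N) (f : fmap R N Nh) : fset R Nh :=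
  fun n Y => exists X, D n X /\ f n X = Y.

Definition inj_on (R : pzRingType) N Nh (D : fset R N) (f : fmap R N Nh) : Prop :=
  forall n A B, D n A -> D n B -> f n A = f n B -> A = B.

From Pilot Require Import Defs.
From HB Require Import structures.
From mathcomp Require Import all_boot all_order all_algebra.
From Stdlib Require Import ClassicalEpsilon.
Set Implicit Arguments. Unset Strict Implicit. Unset Printing Implicit Defensive.
Local Open Scope ring_scope.
Import GRing.Theory.

(* The whole argument rests on one computation: conjugating a direct sum
   A (+) B by the shear [[1, S], [0, 1]] yields [[A, A S - S B], [0, B]].
   Since f respects direct sums and similarities, f maps this matrix to
   [[f A, f A S - S f B], [0, f B]] (lemma [free_map_shear]).  Two
   consequences follow:
   - if A S = S B then f A S = S f B ([free_map_intertwines]); applied to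
     the embeddings [1; 0] and [0 1] this shows f [[X, H], [0, X]] is
     [[f X, Df(X)[H]], [0, f X]] ([free_map_tblk]), so Df(X)[H] = 0 forces
     f [[X, H], [0, X]] = f (X (+) X), and injectivity forces H = 0;
   - with A = B = X (+) Y and S = [[0, 1], [0, 0]], Df(X (+) Y) sends the
     direction [[0, X - Y], [0, 0]] to [[0, f X - f Y], [0, 0]]
     ([Dfree_commutator]); so f X = f Y and nonsingularity give X = Y.
   Finally the image of a free set under a free map is a free set, and a
   pointwise (choice) inverse of an injective free map is again free. *)

Section ShearMatrices.
Variable R : pzRingType.

Lemma shear_conj_diag m k (S : 'M[R]_(m, k)) (a : 'M[R]_m) (b : 'M[R]_k) :
  block_mx 1%:M (- S) 0 1%:M *m block_mx a 0 0 b *m block_mx 1%:M S 0 1%:M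
  = block_mx a (a *m S - S *m b) 0 b.
Proof.
rewrite !mulmx_block !(mul1mx, mulmx1, mul0mx, mulmx0, addr0, add0r).
by rewrite mulNmx addrC.
Qed.

(* The shears by S and by - S are mutually inverse ([Defs.inv_pair] is
   qualified because ssrfun also defines an [inv_pair]). *)
Lemma shear_inv_pair m k (S : 'M[R]_(m, k)) :
  Defs.inv_pair (block_mx 1%:M S 0 1%:M) (block_mx 1%:M (- S) 0 1%:M).
Proof.
split; rewrite mulmx_block !(mul1mx, mulmx1, mul0mx, mulmx0, addr0, add0r).
- by rewrite addrC subrr -scalar_mx_block.
- by rewrite subrr -scalar_mx_block.
Qed.

End ShearMatrices.

Section FreeMaps.
(* The set D and the map f must keep their size argument explicit. *)
Unset Implicit Arguments.
Variables (R : pzRingType) (N Nh : nat) (D : fset R N) (f : fmap R N Nh).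
Set Implicit Arguments.
Hypothesis D_pos : forall n A, D n A -> (0 < n)%N.
Hypothesis D_sum : forall n m A B, D n A -> D m B -> D (n + m)%N (tdsum A B).
Hypothesis D_conj : forall n A S T, D n A -> Defs.inv_pair S T -> D n (tconj T A S).
Hypothesis f_sum : forall n m A B, D n A -> D m B ->
  f (n + m)%N (tdsum A B) = tdsum (f n A) (f m B).
Hypothesis f_conj : forall n A S T, D n A -> Defs.inv_pair S T ->
  f n (tconj T A S) = tconj T (f n A) S.

Definition shear_sum m k (A : mtup R N m) (B : mtup R N k) (S : 'M[R]_(m, k)) :=
  tconj (block_mx 1%:M (- S) 0 1%:M) (tdsum A B) (block_mx 1%:M S 0 1%:M).

Lemma shear_sumE m k (A : mtup R N m) (B : mtup R N k) (S : 'M[R]_(m, k)) :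
  shear_sum A B S = [ffun i => block_mx (A i) (A i *m S - S *m B i) 0 (B i)].
Proof. by apply/ffunP => i; rewrite !ffunE shear_conj_diag. Qed.

Lemma shear_sum_in_D m k (A : mtup R N m) (B : mtup R N k) (S : 'M[R]_(m, k)) :
  D m A -> D k B -> D (m + k)%N (shear_sum A B S).
Proof. by move=> DA DB; apply: D_conj; [apply: D_sum | apply: shear_inv_pair]. Qed.

Lemma free_map_shear m k (A : mtup R N m) (B : mtup R N k) (S : 'M[R]_(m, k)) :
  D m A -> D k B ->
  f (m + k)%N (shear_sum A B S)
  = [ffun i => block_mx (f m A i) (f m A i *m S - S *m f k B i) 0 (f k B i)].
Proof.
move=> DA DB; rewrite /shear_sum f_conj ?f_sum //; [|exact: D_sum|exact: shear_inv_pair].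
by apply/ffunP => i; rewrite !ffunE shear_conj_diag.
Qed.

Lemma free_map_intertwines m k (A : mtup R N m) (B : mtup R N k) (S : 'M[R]_(m, k)) :
  D m A -> D k B -> (forall i, A i *m S = S *m B i) ->
  forall i, f m A i *m S = S *m f k B i.
Proof.
move=> DA DB AS_SB i.
have sum_fixed : shear_sum A B S = tdsum A B.
  by apply/ffunP => j; rewrite shear_sumE !ffunE AS_SB subrr.
move/ffunP/(_ i): (free_map_shear S DA DB).
rewrite sum_fixed f_sum // !ffunE => /eq_block_mx [_ comm0 _ _].
by apply/eqP; rewrite -subr_eq0 -comm0.
Qed.

(* The standing convention of the paper is a theorem: f [[X, H], [0, X]]
   is block upper triangular with f X on the diagonal. *)
Lemma free_map_tblk n (X H : mtup R N n) :
  D n X -> D (n + n)%N (tblk X H) ->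
  f (n + n)%N (tblk X H)
  = [ffun i => block_mx (f n X i) (Dfree f X H i) 0 (f n X i)].
Proof.
move=> DX DXH; apply/ffunP => i.
have left_col : f _ (tblk X H) i *m col_mx 1%:M 0 = col_mx 1%:M 0 *m f n X i.
  apply: free_map_intertwines => // j; rewrite ffunE mul_block_col mul_col_mx.
  by rewrite !(mulmx1, mulmx0, mul1mx, mul0mx, addr0, add0r).
have bottom_row : f n X i *m row_mx 0 1%:M = row_mx 0 1%:M *m f _ (tblk X H) i.
  apply: free_map_intertwines => // j; rewrite ffunE mul_row_block mul_mx_row.
  by rewrite !(mulmx1, mulmx0, mul1mx, mul0mx, addr0, add0r).
move: left_col bottom_row; rewrite !ffunE -[f _ (tblk X H) i]submxK.
rewrite mul_block_col mul_col_mx mul_row_block mul_mx_row.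
rewrite !(mulmx1, mulmx0, mul1mx, mul0mx, addr0, add0r) block_mxKur.
by move=> /eq_col_mx [-> ->] /eq_row_mx [_ ->].
Qed.

Lemma Dfree_commutator n (A : mtup R N n) (S : 'M[R]_n) :
  D n A ->
  let H := [ffun i => A i *m S - S *m A i] in
  D (n + n)%N (tblk A H) /\ Dfree f A H = [ffun i => f n A i *m S - S *m f n A i].
Proof.
move=> DA H.
have shearE : shear_sum A A S = tblk A H.
  by apply/ffunP => i; rewrite shear_sumE !ffunE.
split; first by rewrite -shearE; apply: shear_sum_in_D.
by apply/ffunP => i; rewrite !ffunE -shearE free_map_shear // ffunE block_mxKur.
Qed.

Definition nonsingular_derivative : Prop :=
  forall n (X H : mtup R N n), D n X -> D (n + n)%N (tblk X H) ->
    Dfree f X H = [ffun=> 0] -> H = [ffun=> 0].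

(* (2) => (1): if Df(X)[H] = 0 then f [[X, H], [0, X]] = f (X (+) X). *)
Lemma nonsingular_of_injective : inj_on D f -> nonsingular_derivative.
Proof.
move=> f_inj n X H DX DXH DH0.
have tblk_sum : f _ (tblk X H) = f _ (tdsum X X).
  by rewrite free_map_tblk // f_sum // DH0; apply/ffunP => i; rewrite !ffunE.
move/ffunP: (f_inj _ _ _ DXH (D_sum DX DX) tblk_sum) => XH_XX.
by apply/ffunP => i; move: (XH_XX i); rewrite !ffunE => /eq_block_mx [_ -> _ _].
Qed.

(* (1) => (2): differentiate at X (+) Y along the commutator with the
   nilpotent K = [[0, 1], [0, 0]], which is [[0, X - Y], [0, 0]]. *)
Lemma injective_of_nonsingular : nonsingular_derivative -> inj_on D f.
Proof.
move=> nonsing n X Y DX DY fXY.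
pose K : 'M[R]_(n + n) := block_mx 0 1%:M 0 0.
have commK : forall (P Q : 'M[R]_n),
    block_mx P 0 0 Q *m K - K *m block_mx P 0 0 Q = block_mx 0 (P - Q) 0 0.
  move=> P Q; rewrite /K !mulmx_block.
  rewrite !(mulmx1, mulmx0, mul1mx, mul0mx, addr0, add0r).
  by rewrite opp_block_mx add_block_mx !subrr.
have [DXYH DfH] := Dfree_commutator K (D_sum DX DY).
have diff0 : [ffun i => tdsum X Y i *m K - K *m tdsum X Y i] = [ffun=> 0].
  apply: nonsing (D_sum DX DY) DXYH _.
  rewrite DfH f_sum // fXY; apply/ffunP => i.
  by rewrite !ffunE commK subrr block_mx0.
apply/ffunP => i; move/ffunP/(_ i): diff0; rewrite !ffunE commK => /eqP.
by rewrite block_mx_eq0 => /and4P [_ /eqP XY _ _]; apply/eqP; rewrite -subr_eq0 XY.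
Qed.

Lemma free_image_free_set : is_free_set (free_image D f).
Proof.
split; [|split].
- by move=> n A [X [DX _]]; exact: D_pos DX.
- move=> n m A B [X [DX <-]] [Y [DY <-]].
  by exists (tdsum X Y); split; [exact: D_sum | exact: f_sum].
- move=> n A S T [X [DX <-]] ST.
  by exists (tconj T X S); split; [exact: D_conj | exact: f_conj].
Qed.

(* An injective free map has a free left inverse on its image; it is
   defined pointwise by choosing the unique preimage. *)
Lemma free_inverse : inj_on D f ->
  exists g : fmap R Nh N, is_free_map (free_image D f) g /\
    (forall n X, D n X -> g n (f n X) = X).
Proof.
move=> f_inj.
pose g : fmap R Nh N := fun n Y =>
  epsilon (inhabits ([ffun=> 0] : mtup R N n)) (fun X => D n X /\ f n X = Y).
have gK : forall n X, D n X -> g n (f n X) = X.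
  move=> n X DX.
  have [DgX fgX] := epsilon_spec (inhabits ([ffun=> 0] : mtup R N n))
     (fun X' => D n X' /\ f n X' = f n X) (ex_intro _ X (conj DX erefl)).
  exact: f_inj DgX DX fgX.
exists g; split => //; split.
- move=> n m A B [X [DX <-]] [Y [DY <-]].
  by rewrite -f_sum // !gK //; exact: D_sum.
- move=> n A S T [X [DX <-]] ST.
  by rewrite -f_conj // !gK //; exact: D_conj.
Qed.

End FreeMaps.

Theorem mainTheorem1 (R : pzRingType) (N Nh : nat) (D : fset R N) (f : fmap R N Nh)
  (HD : is_free_set D) (Hf : is_free_map D f) :
  ((forall n (X H : mtup R N n), D n X -> D (n + n)%N (tblk X H) ->
      Dfree f X H = [ffun=> 0] -> H = [ffun=> 0])
   <-> inj_on D f)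
  /\
  (inj_on D f <->
   (inj_on D f /\ is_free_set (free_image D f) /\
    exists g : fmap R Nh N, is_free_map (free_image D f) g /\
      (forall n X, D n X -> g n (f n X) = X))).
Proof.
have [D_pos [D_sum D_conj]] := HD; have [f_sum f_conj] := Hf.
split; split.
- exact: injective_of_nonsingular.
- exact: nonsingular_of_injective.
- move=> f_inj; split; first exact: f_inj.
  split; first exact: free_image_free_set.
  exact: free_inverse.
- by case.
Qed.
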